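(* Let $p,q,r$ be pairwise distinct primes with $p<q$ and $p<r$. Then for every integer $n$, $$|a_{pqr}(n)-a_{pqr}(n-1)|\le 1.$$
   Context: $\Phi_{pqr}(x)=\prod_{0<k<pqr,\ \gcd(k,pqr)=1}(x-\zeta^k)$, where $\zeta$ is a primitive $pqr$-th root of unity, is the ternary cyclotomic polynomial; $a_{pqr}(n)$ denotes its coefficient of $x^n$ (zero for $n$ outside $[0,\deg\Phi_{pqr}]$). *)

From HB Require Import structures.
From mathcomp Require Import all_boot all_order all_algebra all_field.
Set Implicit Arguments. Unset Strict Implicit. Unset Printing Implicit Defensive.
Import Order.TTheory GRing.Theory Num.Theory.
Local Open Scope ring_scope.

(* a_{pqr}(n): coefficient of x^n in the (integral) cyclotomic polynomial
   'Phi_(p*q*r) (mathcomp's Cyclotomic), for an integer n; zero for n < 0,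
   and zero for n > deg automatically (nth default 0). *)
Definition a_pqr (p q r : nat) (n : int) : int :=
  if (n < 0)%R then 0 else ('Phi_(p * q * r))`_(`|n|%N).

From HB Require Import structures.
From mathcomp Require Import all_boot all_order all_algebra all_field.
From mathcomp Require Import zify ring.
Set Implicit Arguments. Unset Strict Implicit. Unset Printing Implicit Defensive.
Import Order.TTheory GRing.Theory Num.Theory.
Local Open Scope ring_scope.

(* Write N = pqr.  Comparing the factorisations of
   the polynomials X^d - 1 (d | N) into cyclotomic polynomials gives
     Phi_N (X - 1) (X^N - 1)^2 = G (X^p - 1) (X^q - 1) (X^r - 1),
   where G is the product of the geometric sums 1 + X^qr + ... + X^((p-1)qr),
   etc.  Its coefficient of X^m is 1 exactly when m is "representable", i.e.
   m = a qr + b pr + c pq with 0 <= a < p, 0 <= b < q, 0 <= c < r.  For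
   0 <= n < N the factors X^N - 1 do not change the coefficient of X^n up to
   sign, so a(n - 1) - a(n) is the third finite difference, with steps p, q,
   r, of the indicator of representable numbers.
   To evaluate that difference, every integer m is written uniquely as
   m = a qr + b pr + c pq - t N with digits a < p, b < q, c < r; then m is
   representable iff t = 0.  Subtracting p, q or r from m changes the digits
   by a subtraction with borrow and t by -1 plus the number of borrows, so the
   eight values of t occurring in the third difference are determined by nine
   borrow bits; a finite check on these bits bounds the difference by 1. *)

Lemma digit_exists (d k : nat) (m : int) : (0 < d)%N -> coprime d k ->
  exists2 a : nat, (a < d)%N & (d %| m - (a * k)%N%:Z)%Z.
Proof.
move=> d_gt0 dk_coprime.
have /coprimezP[[u v] /= uv1] : coprimez d k by [].
have d_pos : 0 < d%:Z by rewrite ltz_nat.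
have := modz_ge0 (m * v) (lt0r_neq0 d_pos); have := ltz_pmod (m * v) d_pos.
have := divz_eq (m * v) d.
set w := ((m * v) %/ d)%Z; set a := ((m * v) %% d)%Z => mvE a_ltd a_ge0.
exists `|a|%N; first by lia.
apply/dvdzP; exists (m * u + w * k).
have -> : (`|a| * k)%N%:Z = a * k by rewrite PoszM gez0_abs.
have -> : a = m * v - w * d by rewrite mvE addrC addKr.
by rewrite -{1}[m]mulr1 -uv1; ring.
Qed.

Lemma digit_unique (d k a a' : nat) : coprime d k -> (a < d)%N -> (a' < d)%N ->
  (d %| (a * k)%N%:Z - (a' * k)%N%:Z)%Z -> a = a'.
Proof.
move=> dk_coprime a_lt a'_lt.
rewrite !PoszM -mulrBl Gauss_dvdzl // => /dvdzP[s sE].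
have [s0 | [s_ge1 | s_le_1]] : s = 0 \/ 1 <= s \/ s <= -1 by lia.
all: nia.
Qed.

Definition pqr_sum (p q r a b c : nat) : nat := a * (q * r) + b * (p * r) + c * (p * q).

Definition expansion (p q r : nat) (m : int) (a b c : nat) (t : int) : Prop :=
  [/\ (a < p)%N, (b < q)%N, (c < r)%N & m = (pqr_sum p q r a b c)%:Z - t * (p * q * r)%N%:Z].

Lemma expansion_swap12 p q r m a b c t :
  expansion p q r m a b c t -> expansion q p r m b a c t.
Proof. by case=> ha hb hc ->; split=> //; rewrite /pqr_sum; lia. Qed.

Lemma expansion_swap13 p q r m a b c t :
  expansion p q r m a b c t -> expansion r q p m c b a t.
Proof. by case=> ha hb hc ->; split=> //; rewrite /pqr_sum; lia. Qed.

(* The first digit of an expansion is determined by m modulo p. *)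
Lemma expansion_first_digit p q r m a b c t a' b' c' t' : coprime p (q * r) ->
  expansion p q r m a b c t -> expansion p q r m a' b' c' t' -> a = a'.
Proof.
move=> cop [ha _ _ mE] [ha' _ _ mE'].
apply: (digit_unique cop ha ha'); apply/dvdzP.
exists ((b'%:Z - b%:Z) * r%:Z + (c'%:Z - c%:Z) * q%:Z + (t - t') * (q * r)%N%:Z).
by move: mE'; rewrite mE /pqr_sum; lia.
Qed.

(* The modulus p itself has first digit 0 and carry 1, because 1 is not of
   the form b r + c q with b < q, c < r. *)
Lemma expansion_first_modulus p q r a b c t :
  (1 < p)%N -> (1 < q)%N -> (1 < r)%N -> coprime p (q * r) ->
  expansion p q r p%:Z a b c t -> a = 0%N /\ t = 1.
Proof.
move=> p_gt1 q_gt1 r_gt1 cop [ha hb hc pE].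
have a0 : a = 0%N.
  apply: (digit_unique cop ha (ltnW p_gt1)); apply/dvdzP.
  exists (1 - b%:Z * r%:Z - c%:Z * q%:Z + t * (q * r)%N%:Z).
  by move: pE; rewrite /pqr_sum; lia.
split=> //.
have brcq : b%:Z * r%:Z + c%:Z * q%:Z = 1 + t * (q * r)%N%:Z.
  apply: (@mulfI _ p%:Z); first by lia.
  by move: pE; rewrite a0 /pqr_sum; lia.
have [t_neg | [t0 | [// | t_ge2]]] : t <= -1 \/ t = 0 \/ t = 1 \/ 2 <= t by lia.
- nia.
- move: brcq; rewrite t0 mul0r addr0; clear pE.
  by case: b hb => [|b] hb; case: c hc => [|c] hc; nia.
- have : b%:Z * r%:Z <= (q%:Z - 1) * r%:Z by apply: ler_wpM2r; lia.
  have : c%:Z * q%:Z <= (r%:Z - 1) * q%:Z by apply: ler_wpM2r; lia.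
  have : 2 * (q * r)%N%:Z <= t * (q * r)%N%:Z by apply: ler_wpM2r.
  lia.
Qed.

Definition sub_digit (d a x : nat) : nat := if (a < x)%N then (a + d - x)%N else (a - x)%N.

Lemma sub_digit0 d a : sub_digit d a 0 = a.
Proof. by rewrite /sub_digit ltn0 subn0. Qed.

Lemma sub_digit_lt d a x : (a < d)%N -> (x < d)%N -> (sub_digit d a x < d)%N.
Proof. by move=> ad xd; rewrite /sub_digit; case: (ltnP a x) => ax /=; lia. Qed.

Lemma sub_digitE d a x : (x < d)%N ->
  (sub_digit d a x)%:Z = a%:Z - x%:Z + (a < x)%N%:Z * d%:Z.
Proof. by move=> xd; rewrite /sub_digit; case: (ltnP a x) => ax /=; lia. Qed.

(* Subtracting a number of carry 1 subtracts digitwise with borrows; each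
   borrow adds a multiple of N, hence one unit to the carry. *)
Lemma expansion_sub p q r m s a b c t x y z :
  expansion p q r m a b c t -> expansion p q r s x y z 1 ->
  expansion p q r (m - s) (sub_digit p a x) (sub_digit q b y) (sub_digit r c z)
    (t - 1 + (a < x)%N + (b < y)%N + (c < z)%N).
Proof.
case=> ha hb hc mE [hx hy hz sE]; split; rewrite ?sub_digit_lt //.
by rewrite mE sE /pqr_sum !PoszD !PoszM !sub_digitE //; ring.
Qed.

Definition representable (p q r : nat) (m : int) : bool :=
  [exists x : 'I_p * 'I_q * 'I_r, m == (pqr_sum p q r x.1.1 x.1.2 x.2)%:Z].

(* The third finite difference of f with steps p, q, r, bracketed as it
   arises from multiplying by (X^p - 1) (X^q - 1) (X^r - 1). *)
Definition third_difference (f : int -> int) (p q r : nat) (n : int) : int :=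
  f (n - r%:Z - q%:Z - p%:Z) - f (n - r%:Z - q%:Z) - (f (n - r%:Z - p%:Z) - f (n - r%:Z))
  - (f (n - q%:Z - p%:Z) - f (n - q%:Z) - (f (n - p%:Z) - f n)).

(* The finite check at the heart of the proof: t is the carry of n, the
   t.. are the carries of n - p, n - q, ..., n - r - q - p expressed through
   the borrow bits (xy = borrow of digit x when subtracting the modulus y,
   xyz = borrow of digit x when subtracting z after y). *)
Lemma eight_term_bound (t : int) (aq ar bp br cp cq arq brp cqp : bool) :
  0 <= t <= 2 ->
  let tp := t - 1 + bp + cp in
  let tq := t - 1 + aq + cq in
  let tr := t - 1 + ar + br in
  let tqp := tq - 1 + bp + cqp in
  let trp := tr - 1 + brp + cp in
  let trq := tr - 1 + arq + cq in
  let trqp := trq - 1 + brp + cqp in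
  0 <= tp -> 0 <= tq -> 0 <= tr -> 0 <= tqp -> 0 <= trp -> 0 <= trq -> 0 <= trqp ->
  `|(trqp == 0)%:R - (trq == 0)%:R - ((trp == 0)%:R - (tr == 0)%:R)
    - ((tqp == 0)%:R - (tq == 0)%:R - ((tp == 0)%:R - (t == 0)%:R))| <= 1 :> int.
Proof.
move=> t_range; have [->|[->|->]] : t = 0 \/ t = 1 \/ t = 2 by lia.
all: by case: aq; case: ar; case: bp; case: br; case: cp; case: cq; case: arq; case: brp; case: cqp.
Qed.

Section Expansion.

Variables p q r : nat.
Hypotheses (p_gt1 : (1 < p)%N) (q_gt1 : (1 < q)%N) (r_gt1 : (1 < r)%N).
Hypotheses (pq_coprime : coprime p q) (pr_coprime : coprime p r) (qr_coprime : coprime q r).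

Let p_qr_coprime : coprime p (q * r). Proof. by rewrite coprimeMr pq_coprime. Qed.
Let q_pr_coprime : coprime q (p * r). Proof. by rewrite coprimeMr coprime_sym pq_coprime. Qed.
Let r_qp_coprime : coprime r (q * p). Proof. by rewrite coprimeMr !(coprime_sym r) qr_coprime. Qed.

(* Existence: choose each digit by its congruence; the remainder is then
   divisible by p, q and r, hence by N. *)
Lemma expansion_exists (m : int) : exists a b c t, expansion p q r m a b c t.
Proof.
have [a ha /dvdzP[ka kaE]] := digit_exists m (ltnW p_gt1) p_qr_coprime.
have [b hb /dvdzP[kb kbE]] := digit_exists m (ltnW q_gt1) q_pr_coprime.
have [c hc /dvdzP[kc kcE]] := digit_exists m (ltnW r_gt1) r_qp_coprime.
pose D := m - (pqr_sum p q r a b c)%:Z.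
have D_p : (p %| D)%Z.
  by apply/dvdzP; exists (ka - b%:Z * r%:Z - c%:Z * q%:Z); rewrite /D /pqr_sum; lia.
have D_q : (q %| D)%Z.
  by apply/dvdzP; exists (kb - a%:Z * r%:Z - c%:Z * p%:Z); rewrite /D /pqr_sum; lia.
have D_r : (r %| D)%Z.
  by apply/dvdzP; exists (kc - a%:Z * q%:Z - b%:Z * p%:Z); rewrite /D /pqr_sum; lia.
have : ((p * q * r)%N %| D)%Z.
  rewrite PoszM Gauss_dvdz; last by change (coprime (p * q) r); rewrite coprimeMl pr_coprime.
  by rewrite PoszM Gauss_dvdz // D_p D_q D_r.
case/dvdzP=> s sE; exists a, b, c, (- s); split=> //.
by move: sE; rewrite /D; lia.
Qed.

Lemma expansion_unique m a b c t a' b' c' t' :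
  expansion p q r m a b c t -> expansion p q r m a' b' c' t' ->
  [/\ a = a', b = b', c = c' & t = t'].
Proof.
move=> E E'.
have ea := expansion_first_digit p_qr_coprime E E'.
have eb := expansion_first_digit q_pr_coprime (expansion_swap12 E) (expansion_swap12 E').
have ec := expansion_first_digit r_qp_coprime (expansion_swap13 E) (expansion_swap13 E').
split=> //; case: E E' => _ _ _ -> [_ _ _]; rewrite ea eb ec.
by move/addrI/oppr_inj/mulIf; apply; lia.
Qed.

Lemma expansion_modulus_p a b c t : expansion p q r p a b c t -> a = 0%N /\ t = 1.
Proof. exact: expansion_first_modulus. Qed.

Lemma expansion_modulus_q a b c t : expansion p q r q a b c t -> b = 0%N /\ t = 1.
Proof. by move/expansion_swap12/expansion_first_modulus; apply. Qed.

Lemma expansion_modulus_r a b c t : expansion p q r r a b c t -> c = 0%N /\ t = 1.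
Proof. by move/expansion_swap13/expansion_first_modulus; apply. Qed.

Lemma representableE m a b c t :
  expansion p q r m a b c t -> representable p q r m = (t == 0).
Proof.
move=> E; apply/existsP/eqP => [[[[x y] z] /eqP mE] | t0].
  have E0 : expansion p q r m x y z 0 by split=> //; rewrite mE mul0r subr0.
  by case: (expansion_unique E E0).
case: E => ha hb hc mE; exists (Ordinal ha, Ordinal hb, Ordinal hc).
by rewrite mE t0 mul0r subr0.
Qed.

Lemma pqr_sum_inj (x y : 'I_p * 'I_q * 'I_r) :
  pqr_sum p q r x.1.1 x.1.2 x.2 = pqr_sum p q r y.1.1 y.1.2 y.2 -> x = y.
Proof.
case: x y => [[a b] c] [[a' b'] c'] /= sumE.
have E : expansion p q r (pqr_sum p q r a b c)%:Z a b c 0.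
  by split; rewrite ?mul0r ?subr0.
have E' : expansion p q r (pqr_sum p q r a b c)%:Z a' b' c' 0.
  by split; rewrite ?sumE ?mul0r ?subr0.
by case: (expansion_unique E E') => /val_inj-> /val_inj-> /val_inj->.
Qed.

(* Numbers below N have a nonnegative carry, nonnegative numbers a carry at
   most 2 (since a qr + b pr + c pq < 3N). *)
Lemma expansion_ge0 m a b c t :
  expansion p q r m a b c t -> m < (p * q * r)%N%:Z -> 0 <= t.
Proof.
case=> _ _ _ -> m_lt; rewrite leNgt; apply/negP => t_neg.
have : t * (p * q * r)%N%:Z <= -1 * (p * q * r)%N%:Z by apply: ler_wpM2r; lia.
lia.
Qed.

Lemma expansion_le2 m a b c t :
  expansion p q r m a b c t -> 0 <= m -> t <= 2.
Proof.
case=> ha hb hc -> m_ge0; rewrite leNgt; apply/negP => t_gt2.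
have : 3 * (p * q * r)%N%:Z <= t * (p * q * r)%N%:Z by apply: ler_wpM2r; lia.
have : a%:Z * (q * r)%N%:Z <= (p%:Z - 1) * (q * r)%N%:Z by apply: ler_wpM2r; lia.
have : b%:Z * (p * r)%N%:Z <= (q%:Z - 1) * (p * r)%N%:Z by apply: ler_wpM2r; lia.
have : c%:Z * (p * q)%N%:Z <= (r%:Z - 1) * (p * q)%N%:Z by apply: ler_wpM2r; lia.
by move: m_ge0; rewrite /pqr_sum; lia.
Qed.

Lemma third_difference_bound (n : int) : 0 <= n < (p * q * r)%N%:Z ->
  `|third_difference (fun m => (representable p q r m)%:R) p q r n| <= 1.
Proof.
move=> n_range.
have [a [b [c [t En]]]] := expansion_exists n.
have [xp [yp [zp [tp Ep]]]] := expansion_exists p%:Z.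
have [xq [yq [zq [tq Eq]]]] := expansion_exists q%:Z.
have [xr [yr [zr [tr Er]]]] := expansion_exists r%:Z.
have [xp0 tp1] := expansion_modulus_p Ep; subst xp tp.
have [yq0 tq1] := expansion_modulus_q Eq; subst yq tq.
have [zr0 tr1] := expansion_modulus_r Er; subst zr tr.
have Enp := expansion_sub En Ep; have Enq := expansion_sub En Eq.
have Enr := expansion_sub En Er; have Enqp := expansion_sub Enq Ep.
have Enrp := expansion_sub Enr Ep; have Enrq := expansion_sub Enr Eq.
have Enrqp := expansion_sub Enrq Ep.
rewrite !sub_digit0 !ltn0 !addr0 in Enp Enq Enr Enqp Enrp Enrq Enrqp.
rewrite /third_difference (representableE En) (representableE Enp).
rewrite (representableE Enq) (representableE Enr) (representableE Enqp).
rewrite (representableE Enrp) (representableE Enrq) (representableE Enrqp).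
apply: eight_term_bound; first by rewrite (expansion_ge0 En) ?(expansion_le2 En); lia.
all: [> apply: (expansion_ge0 Enp) | apply: (expansion_ge0 Enq) | apply: (expansion_ge0 Enr)
  | apply: (expansion_ge0 Enqp) | apply: (expansion_ge0 Enrp) | apply: (expansion_ge0 Enrq)
  | apply: (expansion_ge0 Enrqp)]; lia.
Qed.

End Expansion.

Lemma divisors_mul_prime (m r : nat) : prime r -> (0 < m)%N -> ~~ (r %| m)%N ->
  perm_eq (divisors (m * r)) (divisors m ++ [seq (d * r)%N | d <- divisors m]).
Proof.
move=> r_prime m_gt0 r_ndvd; have r_gt0 := prime_gt0 r_prime.
apply: uniq_perm; first exact: divisors_uniq.
  rewrite cat_uniq divisors_uniq map_inj_uniq ?divisors_uniq ?andbT /=; last first.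
    by move=> x y /eqP; rewrite eqn_pmul2r // => /eqP.
  apply/hasPn => x /mapP [d _ ->]; rewrite -dvdn_divisors //.
  by apply/negP => /(dvdn_trans (dvdn_mull d (dvdnn r))); apply/negP.
move=> x; rewrite mem_cat -dvdn_divisors ?muln_gt0 ?m_gt0 //.
apply/idP/idP => [x_dvd | ].
  case r_dvd: (r %| x)%N.
    apply/orP; right; apply/mapP; case/dvdnP: r_dvd => y xE.
    by exists y => //; rewrite -dvdn_divisors // -(dvdn_pmul2r r_gt0) -xE.
  have x_r_coprime : coprime x r by rewrite coprime_sym prime_coprime // r_dvd.
  by apply/orP; left; rewrite -dvdn_divisors // -(Gauss_dvdl _ x_r_coprime).
case/orP; first by rewrite -dvdn_divisors // => /dvdn_mulr ->.
by case/mapP => d; rewrite -dvdn_divisors // => d_dvd ->; rewrite dvdn_pmul2r.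
Qed.

Lemma divisors_prime p : prime p -> perm_eq (divisors p) [:: 1; p]%N.
Proof.
move=> pp; have p_ndvd1 : ~~ (p %| 1)%N by rewrite dvdn1 neq_ltn prime_gt1 ?orbT.
have := divisors_mul_prime pp (ltn0Sn 0) p_ndvd1.
by rewrite !mul1n (_ : divisors 1 = [:: 1%N]) //= mul1n.
Qed.

Lemma divisors_prime2 p q : prime p -> prime q -> p != q ->
  perm_eq (divisors (p * q)) [:: 1; p; q; p * q]%N.
Proof.
move=> pp pq pq_neq; have q_ndvd : ~~ (q %| p)%N by rewrite dvdn_prime2 // eq_sym.
apply: perm_trans (divisors_mul_prime pq (prime_gt0 pp) q_ndvd) _.
have -> : [:: 1; p; q; p * q]%N = [:: 1; p] ++ [seq (d * q)%N | d <- [:: 1; p]]%N.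
  by rewrite /= mul1n.
by rewrite perm_cat ?perm_map ?divisors_prime.
Qed.

Lemma divisors_prime3 p q r : prime p -> prime q -> prime r -> p != q -> q != r -> p != r ->
  perm_eq (divisors (p * q * r)) [:: 1; p; q; p * q; r; p * r; q * r; p * q * r]%N.
Proof.
move=> pp pq pr pq_neq qr_neq pr_neq.
have r_ndvd : ~~ (r %| p * q)%N.
  by rewrite Euclid_dvdM // !dvdn_prime2 // negb_or !(eq_sym r) pr_neq qr_neq.
have pq_gt0 : (0 < p * q)%N by rewrite muln_gt0 !prime_gt0.
apply: perm_trans (divisors_mul_prime pr pq_gt0 r_ndvd) _.
have -> : [:: 1; p; q; p * q; r; p * r; q * r; p * q * r]%N
  = [:: 1; p; q; p * q] ++ [seq (d * r)%N | d <- [:: 1; p; q; p * q]]%N.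
  by rewrite /= mul1n.
by rewrite perm_cat ?perm_map ?divisors_prime2.
Qed.

Lemma Xn_sub1_prod (n : nat) (s : seq nat) : (0 < n)%N -> perm_eq (divisors n) s ->
  'X^n - 1 = \prod_(d <- s) 'Phi_d.
Proof. by move=> n_gt0 ds; rewrite -prod_Cyclotomic //; apply: perm_big. Qed.

(* Both sides are the product of Phi_d^k(d) over d | pqr, with the same
   multiplicities. *)
Lemma cyclotomic_identity p q r : prime p -> prime q -> prime r ->
  p != q -> q != r -> p != r ->
  'Phi_(p * q * r) * ('X^1 - 1) * ('X^(p * q) - 1) * ('X^(p * r) - 1) * ('X^(q * r) - 1)
  = ('X^(p * q * r) - 1) * ('X^p - 1) * ('X^q - 1) * ('X^r - 1) :> {poly int}.
Proof.
move=> pp pq pr pq_neq qr_neq pr_neq.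
rewrite (Xn_sub1_prod (s := [:: 1%N]) (ltn0Sn 0)) //.
rewrite (Xn_sub1_prod (prime_gt0 pp) (divisors_prime pp)).
rewrite (Xn_sub1_prod (prime_gt0 pq) (divisors_prime pq)).
rewrite (Xn_sub1_prod (prime_gt0 pr) (divisors_prime pr)).
rewrite (Xn_sub1_prod _ (divisors_prime2 pp pq pq_neq)) ?muln_gt0 ?prime_gt0 //.
rewrite (Xn_sub1_prod _ (divisors_prime2 pp pr pr_neq)) ?muln_gt0 ?prime_gt0 //.
rewrite (Xn_sub1_prod _ (divisors_prime2 pq pr qr_neq)) ?muln_gt0 ?prime_gt0 //.
rewrite (Xn_sub1_prod _ (divisors_prime3 pp pq pr pq_neq qr_neq pr_neq)) ?muln_gt0 ?prime_gt0 //.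
by rewrite !big_cons !big_nil; ring.
Qed.

Definition geom (k n : nat) : {poly int} := \sum_(i < n) ('X^k) ^+ i.

Lemma Xn_sub1_geom k n : 'X^(k * n) - 1 = ('X^k - 1) * geom k n.
Proof. by rewrite exprM subrX1. Qed.

Definition pqr_poly (p q r : nat) : {poly int} :=
  geom (q * r) p * geom (p * r) q * geom (p * q) r.

Lemma pqr_polyE p q r :
  pqr_poly p q r = \sum_(x : 'I_p * 'I_q * 'I_r) 'X^(pqr_sum p q r x.1.1 x.1.2 x.2).
Proof.
rewrite /pqr_poly /geom big_distrl /=.
under eq_bigr => i _ do rewrite big_distrr /=.
rewrite pair_bigA /= big_distrl /=.
under eq_bigr => ij _ do rewrite big_distrr /=.
rewrite pair_bigA /=; apply: eq_bigr => -[[i j] k] _ /=.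
by rewrite -!exprM -!exprD /pqr_sum !(mulnC _ i) !(mulnC _ j) !(mulnC _ k).
Qed.

(* Multiply the cyclotomic identity by the three geometric sums, each of
   which turns one factor X^d - 1 into X^N - 1, and cancel one X^N - 1. *)
Lemma key_identity p q r : prime p -> prime q -> prime r ->
  p != q -> q != r -> p != r ->
  'Phi_(p * q * r) * ('X^1 - 1) * ('X^(p * q * r) - 1) * ('X^(p * q * r) - 1)
  = pqr_poly p q r * ('X^p - 1) * ('X^q - 1) * ('X^r - 1).
Proof.
move=> pp pq pr pq_neq qr_neq pr_neq.
have XN_neq0 : 'X^(p * q * r) - 1 != 0 :> {poly int}.
  by rewrite -size_poly_eq0 size_XnsubC // !muln_gt0 !prime_gt0.
apply: (mulIf XN_neq0).
have E1 : 'X^(p * q * r) - 1 = ('X^(p * q) - 1) * geom (p * q) r by rewrite Xn_sub1_geom.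
have E2 : 'X^(p * q * r) - 1 = ('X^(p * r) - 1) * geom (p * r) q.
  by rewrite -Xn_sub1_geom mulnAC.
have E3 : 'X^(p * q * r) - 1 = ('X^(q * r) - 1) * geom (q * r) p.
  by rewrite -Xn_sub1_geom [(q * r * p)%N]mulnC mulnA.
rewrite {1}E1 {1}E2 {1}E3.
transitivity ('Phi_(p * q * r) * ('X^1 - 1) * ('X^(p * q) - 1) * ('X^(p * r) - 1)
  * ('X^(q * r) - 1) * pqr_poly p q r); first by rewrite /pqr_poly; ring.
by rewrite cyclotomic_identity // /pqr_poly; ring.
Qed.

Definition coefz (P : {poly int}) (m : int) : int := if m < 0 then 0 else P`_`|m|.

Lemma coefz_nat (P : {poly int}) (k : nat) : coefz P k = P`_k.
Proof. by rewrite /coefz ltz_nat ltn0. Qed.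

Lemma coefz_neg (P : {poly int}) m : m < 0 -> coefz P m = 0.
Proof. by rewrite /coefz => ->. Qed.

Lemma coefz_size (P : {poly int}) m : (size P)%:Z <= m -> coefz P m = 0.
Proof.
case: m => [k | k] P_le; last by rewrite coefz_neg.
by rewrite coefz_nat nth_default // -lez_nat.
Qed.

Lemma coefz_mulXsub1 (P : {poly int}) (k : nat) m :
  coefz (P * ('X^k - 1)) m = coefz P (m - k%:Z) - coefz P m.
Proof.
case: m => [j | j]; last by rewrite !coefz_neg ?subr0 //; lia.
rewrite coefz_nat mulrBr mulr1 coefB coefMXn.
case: leqP => kj; first by rewrite subzn // !coefz_nat.
by rewrite coefz_neg ?sub0r ?coefz_nat //; lia.
Qed.

Lemma coefz_mulXsub1_low (P : {poly int}) (k : nat) m :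
  m < k%:Z -> coefz (P * ('X^k - 1)) m = - coefz P m.
Proof. by move=> m_lt; rewrite coefz_mulXsub1 coefz_neg ?sub0r //; lia. Qed.

Lemma coefz_third_difference (P : {poly int}) (p q r : nat) n :
  coefz (P * ('X^p - 1) * ('X^q - 1) * ('X^r - 1)) n = third_difference (coefz P) p q r n.
Proof. by rewrite !coefz_mulXsub1. Qed.

Lemma eq_third_difference (f g : int -> int) p q r n : f =1 g ->
  third_difference f p q r n = third_difference g p q r n.
Proof. by move=> fg; rewrite /third_difference !fg. Qed.

(* The coefficients of pqr_poly are the indicator of representable numbers,
   because distinct digit triples give distinct exponents. *)
Lemma coefz_pqr_poly p q r m : (1 < p)%N -> (1 < q)%N -> (1 < r)%N ->
  coprime p q -> coprime p r -> coprime q r ->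
  coefz (pqr_poly p q r) m = (representable p q r m)%:R.
Proof.
move=> p_gt1 q_gt1 r_gt1 pq_coprime pr_coprime qr_coprime.
rewrite /representable; case: m => [k | k]; last first.
  by rewrite coefz_neg //; case: existsP => // -[x /eqP].
rewrite coefz_nat pqr_polyE coef_sum.
under eq_bigr do rewrite coefXn.
case: existsP => [[x0 /eqP [kE]] | no_rep].
  rewrite (bigD1 x0) //= kE eqxx big1 ?addr0 // => y y_neq.
  case: eqP => // /(pqr_sum_inj p_gt1 q_gt1 r_gt1 pq_coprime pr_coprime qr_coprime) x0y.
  by rewrite x0y eqxx in y_neq.
by rewrite big1 // => y _; case: eqP => // kE; case: no_rep; exists y; rewrite kE.
Qed.

(* deg Phi_pqr = (p - 1)(q - 1)(r - 1) < pqr - 1. *)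
Lemma size_Phi_pqr p q r : prime p -> prime q -> prime r ->
  p != q -> q != r -> p != r -> (size 'Phi_(p * q * r) < p * q * r)%N.
Proof.
move=> pp pq pr pq_neq qr_neq pr_neq.
have pq_coprime : coprime p q by rewrite prime_coprime // dvdn_prime2.
have pq_r_coprime : coprime (p * q) r.
  by rewrite coprimeMl !prime_coprime // !dvdn_prime2 // pr_neq qr_neq.
rewrite size_Cyclotomic !totient_coprime // !totient_prime //.
by have := prime_gt1 pp; have := prime_gt1 pq; have := prime_gt1 pr; nia.
Qed.

Lemma coprime_distinct_primes a b : prime a -> prime b -> a != b -> coprime a b.
Proof. by move=> pa pb ab; rewrite prime_coprime // dvdn_prime2. Qed.

Theorem theorem3 (p q r : nat) :
  prime p -> prime q -> prime r ->
  p != q -> q != r -> p != r ->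
  (p < q)%N -> (p < r)%N ->
  forall n : int, `|a_pqr p q r n - a_pqr p q r (n - 1)| <= 1.
Proof.
move=> pp pq pr pq_neq qr_neq pr_neq _ _ n.
have aE m : a_pqr p q r m = coefz 'Phi_(p * q * r) m by [].
rewrite !aE; have [n_neg | n_ge0] := ltrP n 0.
  by rewrite !coefz_neg ?subrr ?normr0 //; lia.
have [n_ltN | n_geN] := ltrP n (p * q * r)%N%:Z; last first.
  have size_lt := size_Phi_pqr pp pq pr pq_neq qr_neq pr_neq.
  by rewrite !coefz_size ?subrr ?normr0 //; lia.
(* a(n) - a(n - 1) is, up to sign, the coefficient of X^n in both sides of
   the key identity. *)
rewrite -normrN opprB -(coefz_mulXsub1 _ 1) -[coefz _ n]opprK.
rewrite -!(coefz_mulXsub1_low _ n_ltN) key_identity // coefz_third_difference.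
have [p_gt1 q_gt1 r_gt1] := And3 (prime_gt1 pp) (prime_gt1 pq) (prime_gt1 pr).
have pq_coprime := coprime_distinct_primes pp pq pq_neq.
have pr_coprime := coprime_distinct_primes pp pr pr_neq.
have qr_coprime := coprime_distinct_primes pq pr qr_neq.
rewrite (eq_third_difference _ _ _ _
  (fun m => coefz_pqr_poly m p_gt1 q_gt1 r_gt1 pq_coprime pr_coprime qr_coprime)).
by apply: third_difference_bound => //; rewrite n_ge0 n_ltN.
Qed.
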